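(* Let $M$ be a matroid on $E=[n]$, $t,u$ positive integers, $\mathcal F$ the regular mixed subdivision defined below. For an ordered partition $(X,Y)$ of $[n]\setminus\{1\}$ let $T_{(X,Y)}=\mathbf e_{B}+u\Delta_{\{1\}\cup X}+t\nabla_{\{1\}\cup Y}$ be the top-degree face of $\mathcal F$ indexed by it ($B$ the unique basis making this a top-degree face). Let $(X_1,Y_1)\ne(X_2,Y_2)$ be two such partitions whose top-degree faces $T_1,T_2$ contain a common point $p$, and let $(X_3,Y_3)$ be a partition of $[n]\setminus\{1\}$ with $X_1\cap X_2\subseteq X_3$ and $Y_1\cap Y_2\subseteq Y_3$. Then $p\in T_3=T_{(X_3,Y_3)}$, and the bases of $T_1,T_2,T_3$ all coincide.
   Context: $M$ is a matroid on $E=[n]=\{1,\dots,n\}$. $P(M)\subseteq\mathbb R^E$ is the convex hull of the indicator vectors $\mathbf e_B$ of bases $B$. For nonempty $S\subseteq E$, $\Delta_S=\operatorname{conv}\{\mathbf e_i:i\in S\}$, $\nabla_S=-\Delta_S$, $\Delta=\Delta_E$, $\nabla=\nabla_E$. The subdivision: fix reals $0<\alpha_1<\dots<\alpha_n$, $0<\beta_1<\dots<\beta_n$; let $\mathit{Lift}=\operatorname{conv}\{(u\mathbf e_i,\alpha_i)\}+(P(M)\times\{0\})+\operatorname{conv}\{(-t\mathbf e_i,\beta_i)\}\subseteq\mathbb R^E\times\mathbb R$. The lower faces of $\mathit{Lift}$ are the faces on which some linear functional with last coordinate $-1$ attains its maximum; their projections to $\mathbb R^E$ form the regular mixed subdivision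 $\mathcal F$ of $u\Delta+P(M)+t\nabla$. Each cell is canonically written $F+G+H$ (projections of the faces of the three summands of $\mathit{Lift}$ maximizing the same functional), with $F$ a face of $u\Delta$, $G$ a face of $P(M)$, $H$ a face of $t\nabla$. A top-degree face is a maximal cell $F+G+H$ of $\mathcal F$ with $G$ a vertex of $P(M)$. For each $X,Y$ with $X\cup Y=E$, $X\cap Y=\{1\}$ there is a unique basis $B$ such that $u\Delta_X+\mathbf e_B+t\nabla_Y$ is a top-degree face. *)

From HB Require Import structures.
From mathcomp Require Import all_boot all_order all_algebra.
Set Implicit Arguments. Unset Strict Implicit. Unset Printing Implicit Defensive.
Import Order.TTheory GRing.Theory Num.Theory.
Local Open Scope ring_scope.

Section Defs.
Variable R : realFieldType.
Variable k : nat.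
Notation pt := 'rV[R]_k.

Definition is_matroid (bases : {set {set 'I_k}}) : Prop :=
  bases != set0 /\
  forall B1 B2, B1 \in bases -> B2 \in bases ->
    forall x, x \in B1 :\: B2 ->
      exists2 y, y \in B2 :\: B1 & (B1 :\ x) :|: [set y] \in bases.

Definition evec (i : 'I_k) : pt := \row_j (j == i)%:R.
Definition ind (B : {set 'I_k}) : pt := \row_j (j \in B)%:R.

Definition in_conv (I : finType) (S : {set I}) (v : I -> pt) (p : pt) : Prop :=
  exists w : I -> R,
    (forall i, 0 <= w i) /\ (forall i, i \notin S -> w i = 0) /\
    \sum_(i in S) w i = 1 /\ p = \sum_(i in S) w i *: v i.

Definition msum3 (A B C : pt -> Prop) (p : pt) : Prop :=
  exists a b c, A a /\ B b /\ C c /\ p = a + b + c.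

Definition uDelta (u : R) (S : {set 'I_k}) : pt -> Prop :=
  in_conv S (fun i => u *: evec i).
Definition tNabla (t : R) (S : {set 'I_k}) : pt -> Prop :=
  in_conv S (fun i => - (t *: evec i)).

Variables (bases : {set {set 'I_k}}) (u t : R) (alpha beta : 'I_k -> R).

(* For the linear functional (c, -1) on R^E x R, the maximizing faces of the
   three summands of Lift (given by index sets / sets of bases). *)
Definition face1 (c : pt) : {set 'I_k} :=
  [set i | [forall j, u * c 0 j - alpha j <= u * c 0 i - alpha i]].
Definition wt (c : pt) (B : {set 'I_k}) : R := \sum_(i in B) c 0 i.
Definition face2 (c : pt) : {set {set 'I_k}} :=
  [set B in bases | [forall B' in bases, wt c B' <= wt c B]].
Definition face3 (c : pt) : {set 'I_k} :=
  [set i | [forall j, - (t * c 0 j) - beta j <= - (t * c 0 i) - beta i]].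

Definition cell (c : pt) : pt -> Prop :=
  msum3 (uDelta u (face1 c)) (in_conv (face2 c) ind) (tNabla t (face3 c)).

Definition maximal_cell (c : pt) : Prop :=
  forall c' : pt, (forall p, cell c p -> cell c' p) ->
                  (forall p, cell c' p -> cell c p).

Definition top_degree_face (X : {set 'I_k}) (B : {set 'I_k})
    (Y : {set 'I_k}) : Prop :=
  exists c : pt, [/\ face1 c = X, face2 c = [set B], face3 c = Y &
                     maximal_cell c].

Definition Tface (X B Y : {set 'I_k}) : pt -> Prop :=
  msum3 (uDelta u X) (fun q => q = ind B) (tNabla t Y).

End Defs.

From HB Require Import structures.
From mathcomp Require Import all_boot all_order all_algebra.
From mathcomp Require Import ring lra.
Import Order.TTheory GRing.Theory Num.Theory.
Local Open Scope ring_scope.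
Set Implicit Arguments. Unset Strict Implicit. Unset Printing Implicit Defensive.

(* The height of a point of Lift above p (the alpha- and beta-weights of a
   representation of p) does not depend on the functional, so evaluating the
   lifting functionals of T1 and T2 at the two representations of p shows that
   the representation coming from T2 already lies in the cell of T1: hence
   B1 = B2, and the simplex weights are supported on the intersections
   {1} u (X1 n X2) and {1} u (Y1 n Y2), which sit inside T3's simplices.
   For B3, the defining conditions of a top-degree face force
   c_j = c_1 + (alpha_j - alpha_1)/u for j in X and c_j = c_1 + (beta_1 - beta_j)/t
   for j in Y; since alpha and beta order E alike and X3 lies between X1 and X2,
   every strict comparison c_y < c_x holding for the functionals of T1 and T2
   also holds for that of T3.  Thus every basis exchange from B1 decreases the
   weight of T3's functional, and a basis that is optimal for single exchanges
   is the optimal basis of a matroid. *)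

Section Pairing.
Variables (R : realFieldType) (k : nat).
Implicit Types (c p q : 'rV[R]_k).

Definition pairing c p : R := \sum_j c 0 j * p 0 j.

Lemma pairingD c p q : pairing c (p + q) = pairing c p + pairing c q.
Proof. by rewrite /pairing -big_split; apply: eq_bigr => j _; rewrite mxE mulrDr. Qed.

Lemma pairing_sum (I : finType) (S : {set I}) c (f : I -> 'rV[R]_k) :
  pairing c (\sum_(i in S) f i) = \sum_(i in S) pairing c (f i).
Proof.
rewrite /pairing; under eq_bigr do rewrite summxE big_distrr /=.
by rewrite exchange_big.
Qed.

Lemma pairingZ c a p : pairing c (a *: p) = a * pairing c p.
Proof. by rewrite /pairing big_distrr; apply: eq_bigr => j _; rewrite !mxE mulrCA. Qed.

Lemma pairingN c p : pairing c (- p) = - pairing c p.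
Proof. by rewrite -scaleN1r pairingZ mulN1r. Qed.

Lemma pairing_evec c i : pairing c (evec R i) = c 0 i.
Proof.
rewrite /pairing (bigD1 i) //= big1 => [|j ji]; rewrite !mxE ?eqxx.
  by rewrite mulr1 addr0.
by rewrite (negbTE ji) mulr0.
Qed.

Lemma pairing_ind c B : pairing c (ind R B) = wt c B.
Proof.
rewrite /pairing /wt [RHS]big_mkcond; apply: eq_bigr => j _; rewrite mxE.
by case: (j \in B); rewrite ?mulr1 ?mulr0.
Qed.

End Pairing.

Section ConvexWeights.
Variables (R : realFieldType) (I : finType).
Implicit Types (S : {set I}) (w f : I -> R).

Definition conv_weights S w :=
  [/\ forall i, 0 <= w i, forall i, i \notin S -> w i = 0 & \sum_(i in S) w i = 1].

Lemma conv_weights_supp S w i : conv_weights S w -> w i != 0 -> i \in S.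
Proof. by case=> _ w_out _; apply: contraR => /w_out ->. Qed.

Lemma conv_weights_mem S w : conv_weights S w -> exists i, i \in S.
Proof.
case=> _ _ w_sum; case: (set_0Vmem S) => [S0 | [i iS]]; last by exists i.
by move: w_sum; rewrite S0 big_set0 => /eqP; rewrite eq_sym oner_eq0.
Qed.

Lemma conv_weights_restrict S S' w :
  conv_weights S w -> (forall i, w i != 0 -> i \in S') -> conv_weights S' w.
Proof.
move=> [w_ge0 w_out w_sum] w_supp.
have w_out' i : i \notin S' -> w i = 0 by apply: contraNeq; apply: w_supp.
by split=> //; rewrite big_rmcond // -w_sum big_rmcond.
Qed.

Lemma conv_comb_le S w f m : conv_weights S w -> (forall i, f i <= m) ->
  \sum_(i in S) w i * f i <= m /\
  (\sum_(i in S) w i * f i = m -> forall i, w i != 0 -> f i = m).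
Proof.
move=> [w_ge0 w_out w_sum] f_le.
have gap : m - \sum_(i in S) w i * f i = \sum_(i in S) w i * (m - f i).
  rewrite -[X in X - _]mul1r -w_sum big_distrl /= -sumrB.
  by apply: eq_bigr => i _; ring.
have gap_ge0 i : 0 <= w i * (m - f i) by rewrite mulr_ge0 ?subr_ge0.
split; first by rewrite -subr_ge0 gap sumr_ge0.
move=> eq_m i wi; have iS : i \in S by apply: contraR wi => /w_out ->.
have sum0 : \sum_(i in S) w i * (m - f i) = 0 by rewrite -gap eq_m subrr.
have /eqP := psumr_eq0P (fun j _ => gap_ge0 j) sum0 iS.
by rewrite mulf_eq0 (negbTE wi) subr_eq0 => /eqP.
Qed.

Lemma conv_comb_const S w f m : conv_weights S w ->
  (forall i, i \in S -> f i = m) -> \sum_(i in S) w i * f i = m.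
Proof.
move=> [_ _ w_sum] f_m; rewrite (eq_bigr (fun i => w i * m)); last first.
  by move=> i /f_m ->.
by rewrite -big_distrl /= w_sum mul1r.
Qed.

Lemma conv_weights_sum (V : lmodType R) S S' w (F : I -> V) :
  conv_weights S w -> conv_weights S' w ->
  \sum_(i in S) w i *: F i = \sum_(i in S') w i *: F i.
Proof.
move=> [_ w_out _] [_ w_out' _].
rewrite big_rmcond => [|i /w_out ->]; last by rewrite scale0r.
by rewrite [RHS]big_rmcond // => i /w_out' ->; rewrite scale0r.
Qed.

End ConvexWeights.

Lemma argmax_setP (R : realFieldType) (I : finType) (f : I -> R) (S : {set I}) i0 :
  [set i | [forall j, f j <= f i]] = S -> i0 \in S ->
  (forall j, f j <= f i0) /\ (forall j, j \in S <-> f j = f i0).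
Proof.
move=> <-; rewrite inE => /forallP f_le; split=> // j; rewrite inE; split.
  by move/forallP => f_le_j; apply/eqP; rewrite eq_le f_le_j f_le.
by move=> ->; apply/forallP.
Qed.

Section OptimalBasis.
Variables (R : realFieldType) (k : nat) (bases : {set {set 'I_k}}).
Implicit Types (c : 'rV[R]_k) (B : {set 'I_k}).

Lemma wt_exchange c B x y : x \in B -> y \notin B ->
  wt c (B :\ x :|: [set y]) = wt c B - c 0 x + c 0 y.
Proof.
move=> xB yB; rewrite /wt setUC big_setU1 /=; last by rewrite in_setD1 (negbTE yB) andbF.
by rewrite [in RHS](big_setD1 x xB) /=; ring.
Qed.

Lemma face2P c B : face2 bases c = [set B] ->
  [/\ B \in bases, forall B', B' \in bases -> wt c B' <= wt c B &
      forall B', B' \in bases -> wt c B' = wt c B -> B' = B].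
Proof.
move=> f2; have : B \in face2 bases c by rewrite f2 set11.
rewrite inE => /andP[BB /forall_inP B_max]; split=> // B' B'B eq_wt.
have : B' \in face2 bases c.
  by rewrite inE B'B; apply/forall_inP => B'' B''B; rewrite eq_wt B_max.
by rewrite f2 in_set1 => /eqP.
Qed.

Lemma face2_exchange_lt c B x y : face2 bases c = [set B] ->
  x \in B -> y \notin B -> B :\ x :|: [set y] \in bases -> c 0 y < c 0 x.
Proof.
move=> /face2P[_ B_max B_uniq] xB yB exB.
have neB : B :\ x :|: [set y] != B.
  by apply: contraNneq yB => <-; rewrite in_setU set11 orbT.
have : wt c (B :\ x :|: [set y]) < wt c B.
  by rewrite lt_neqAle B_max // andbT; apply: contra neB => /eqP /(B_uniq _ exB) ->.
by rewrite wt_exchange //; lra.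
Qed.

Lemma exchange_optimal_base c B B' : is_matroid bases ->
  B \in bases -> face2 bases c = [set B'] ->
  (forall x y, x \in B -> y \notin B -> B :\ x :|: [set y] \in bases -> c 0 y < c 0 x) ->
  B = B'.
Proof.
move=> [_ exchange] BB f2 B_loc; have [B'B _ _] := face2P f2.
set D := (B :\: B') :|: (B' :\: B).
case: (set_0Vmem D) => [/eqP | [z0 z0D]].
  by rewrite setU_eq0 !setD_eq0 => /andP[sBB' sB'B]; apply/eqP; rewrite eqEsubset sBB' sB'B.
have [z zD z_min] := arg_minP (fun i => c 0 i) z0D.
suff [y yD] : exists2 y, y \in D & c 0 y < c 0 z by rewrite ltNge z_min.
move/setUP: zD => [] zD.
- have [y yD exB] := exchange B B' BB B'B z zD.
  move: zD yD; rewrite !inE => /andP[_ zB] /andP[yB yB'].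
  by exists y; [rewrite !inE yB yB' | apply: B_loc].
- have [y yD exB'] := exchange B' B B'B BB z zD.
  move: zD yD; rewrite !inE => /andP[_ zB'] /andP[yB' yB].
  by exists y; [rewrite !inE yB yB' | apply: face2_exchange_lt f2 _ _ exB'].
Qed.

End OptimalBasis.

Definition between (b1 b2 b3 : bool) := (b1 && b2 ==> b3) && (b3 ==> b1 || b2).

Definition partitions_setC1 (T : finType) (x : T) (X Y : {set T}) :=
  [disjoint X & Y] /\ X :|: Y = [set~ x].

Lemma partitions_between (T : finType) (x0 : T) (X1 Y1 X2 Y2 X3 Y3 : {set T}) :
  partitions_setC1 x0 X1 Y1 -> partitions_setC1 x0 X2 Y2 -> partitions_setC1 x0 X3 Y3 ->
  X1 :&: X2 \subset X3 -> Y1 :&: Y2 \subset Y3 ->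
  forall i, between (i \in X1) (i \in X2) (i \in X3).
Proof.
move=> [_ XY1] [_ XY2] [dis3 XY3] sX sY i; apply/andP; split; apply/implyP.
  by move=> iX12; apply: (subsetP sX); rewrite inE.
move=> iX3; apply/negPn/negP; rewrite negb_or => /andP[iX1 iX2].
have i_ne : i \in [set~ x0] by rewrite -XY3 in_setU iX3.
have iY1 : i \in Y1 by move: i_ne; rewrite -XY1 in_setU (negbTE iX1).
have iY2 : i \in Y2 by move: i_ne; rewrite -XY2 in_setU (negbTE iX2).
have iY3 : i \in Y3 by apply: (subsetP sY); rewrite inE iY1 iY2.
by rewrite (disjointFr dis3 iX3) in iY3.
Qed.

Lemma setU1I_subset (T : finType) (x : T) (A1 A2 A3 : {set T}) :
  A1 :&: A2 \subset A3 -> (x |: A1) :&: (x |: A2) \subset x |: A3.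
Proof. by move=> sA; rewrite -setUIr setUS. Qed.

Lemma incr_ord0_min (R : realFieldType) n (a : 'I_n.+1 -> R) :
  (forall i j : 'I_n.+1, (i < j)%N -> a i < a j) -> forall j, a ord0 <= a j.
Proof.
by move=> a_incr j; have [-> // | j0] := eqVneq j ord0; rewrite ltW ?a_incr ?lt0n.
Qed.

Lemma incr_same_order (R : realFieldType) n (a b : 'I_n.+1 -> R) :
  (forall i j : 'I_n.+1, (i < j)%N -> a i < a j) ->
  (forall i j : 'I_n.+1, (i < j)%N -> b i < b j) ->
  forall x y, x != y -> (a x < a y /\ b x < b y) \/ (a y < a x /\ b y < b x).
Proof.
move=> a_incr b_incr x y xy; case: (ltngtP x y) => [lxy | lyx | /ord_inj exy].
- by left; rewrite a_incr ?b_incr.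
- by right; rewrite a_incr ?b_incr.
- by rewrite exy eqxx in xy.
Qed.

(* Only when both (bx1, bx2) and (by1, by2) disagree can the conclusion fail,
   and that case contradicts the common ordering of (dx, dy) and (ey, ex). *)
Lemma select_between_lt (R : realFieldType) (dx dy ex ey : R)
    (bx1 bx2 bx3 by1 by2 by3 : bool) :
  (dx < dy /\ ey < ex) \/ (dy < dx /\ ex < ey) -> ex <= dx -> ey <= dy ->
  between bx1 bx2 bx3 -> between by1 by2 by3 ->
  (if by1 then dy else ey) < (if bx1 then dx else ex) ->
  (if by2 then dy else ey) < (if bx2 then dx else ex) ->
  (if by3 then dy else ey) < (if bx3 then dx else ex).
Proof.
move=> [[? ?] | [? ?]] ? ?;
by case: bx1 bx2 bx3 by1 by2 by3 => [] [] [] [] [] [] //= _ _; lra.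
Qed.

Section Subdivision.
Variables (R : realFieldType) (k : nat) (bases : {set {set 'I_k}}).
Variables (u t : R) (alpha beta : 'I_k -> R).
Implicit Types (c p : 'rV[R]_k) (S T B X Y : {set 'I_k}) (w v : 'I_k -> R).

Definition cell_faces c S B T :=
  [/\ face1 u alpha c = S, face2 bases c = [set B] & face3 t beta c = T].

Lemma top_degree_face_cell S B T :
  top_degree_face bases u t alpha beta S B T -> exists c, cell_faces c S B T.
Proof. by move=> [c [f1 f2 f3 _]]; exists c. Qed.

Definition tface_rep S w B T v p :=
  [/\ conv_weights S w, conv_weights T v &
      p = \sum_(i in S) w i *: (u *: evec R i) + ind R B
          + \sum_(j in T) v j *: - (t *: evec R j)].

Lemma TfaceP S B T p : Tface u t S B T p <-> exists w v, tface_rep S w B T v p.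
Proof.
split.
  move=> [a [b [q [[w [? [? [? ->]]]] [-> [[v [? [? [? ->]]]] ->]]]]]].
  by exists w, v.
move=> [w [v [[? ? ?] [? ? ?] ->]]].
exists (\sum_(i in S) w i *: (u *: evec R i)), (ind R B),
  (\sum_(j in T) v j *: - (t *: evec R j)).
by split; [exists w | split; [| split; [exists v |]]].
Qed.

Lemma tface_rep_restrict S w B T v p S' T' : tface_rep S w B T v p ->
  (forall i, w i != 0 -> i \in S') -> (forall j, v j != 0 -> j \in T') ->
  Tface u t S' B T' p.
Proof.
move=> [wS vT ->] w_supp v_supp; apply/TfaceP; exists w, v.
have wS' := conv_weights_restrict wS w_supp.
have vT' := conv_weights_restrict vT v_supp.
by split=> //; congr (_ + _ + _); apply: conv_weights_sum.
Qed.

(* lift_value is the functional (c, -1) evaluated at the point of Lift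
   determined by a representation; lift_height is that point's last coordinate. *)
Definition lift_value c S w B T v :=
  \sum_(i in S) w i * (u * c 0 i - alpha i) + wt c B
  + \sum_(j in T) v j * (- (t * c 0 j) - beta j).

Definition lift_height S w T v :=
  \sum_(i in S) w i * alpha i + \sum_(j in T) v j * beta j.

Lemma pairing_tface_rep c S w B T v p : tface_rep S w B T v p ->
  pairing c p = lift_value c S w B T v + lift_height S w T v.
Proof.
move=> [_ _ ->]; rewrite !pairingD !pairing_sum pairing_ind /lift_value /lift_height.
have -> : \sum_(i in S) pairing c (w i *: (u *: evec R i)) =
    \sum_(i in S) w i * (u * c 0 i - alpha i) + \sum_(i in S) w i * alpha i.
  by rewrite -big_split; apply: eq_bigr => i _ /=; rewrite !pairingZ pairing_evec; ring.
have -> : \sum_(j in T) pairing c (v j *: - (t *: evec R j)) =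
    \sum_(j in T) v j * (- (t * c 0 j) - beta j) + \sum_(j in T) v j * beta j.
  rewrite -big_split; apply: eq_bigr => j _ /=.
  by rewrite pairingZ pairingN pairingZ pairing_evec; ring.
ring.
Qed.

Lemma lift_value_max c S0 B0 T0 w0 v0 S w B T v :
  cell_faces c S0 B0 T0 -> conv_weights S0 w0 -> conv_weights T0 v0 ->
  B \in bases -> conv_weights S w -> conv_weights T v ->
  lift_value c S w B T v <= lift_value c S0 w0 B0 T0 v0 /\
  (lift_value c S w B T v = lift_value c S0 w0 B0 T0 v0 ->
   [/\ B = B0, forall i, w i != 0 -> i \in S0 & forall j, v j != 0 -> j \in T0]).
Proof.
move=> [f1 f2 f3] w0S0 v0T0 BB wS vT.
have [i1 i1S0] := conv_weights_mem w0S0; have [i3 i3T0] := conv_weights_mem v0T0.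
have [f1_le f1_eq] := argmax_setP (f := fun i => u * c 0 i - alpha i) f1 i1S0.
have [f3_le f3_eq] := argmax_setP (f := fun j => - (t * c 0 j) - beta j) f3 i3T0.
have [_ B0_max B0_uniq] := face2P f2.
have [s1_le s1_eq] := conv_comb_le wS f1_le.
have [s3_le s3_eq] := conv_comb_le vT f3_le.
have wtB := B0_max _ BB.
have s1_max : \sum_(i in S0) w0 i * (u * c 0 i - alpha i) = u * c 0 i1 - alpha i1.
  by apply: conv_comb_const w0S0 _ => i /f1_eq.
have s3_max : \sum_(j in T0) v0 j * (- (t * c 0 j) - beta j) = - (t * c 0 i3) - beta i3.
  by apply: conv_comb_const v0T0 _ => j /f3_eq.
rewrite /lift_value s1_max s3_max; split; first lra.
move=> eq_max; split.
- by apply: B0_uniq => //; lra.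
- by move=> i wi; apply/f1_eq/s1_eq => //; lra.
- by move=> j vj; apply/f3_eq/s3_eq => //; lra.
Qed.

Lemma common_point_face c1 c2 S1 B1 T1 S2 B2 T2 w1 v1 w2 v2 p :
  cell_faces c1 S1 B1 T1 -> cell_faces c2 S2 B2 T2 ->
  tface_rep S1 w1 B1 T1 v1 p -> tface_rep S2 w2 B2 T2 v2 p ->
  [/\ B2 = B1, forall i, w2 i != 0 -> i \in S1 & forall j, v2 j != 0 -> j \in T1].
Proof.
move=> f1 f2 r1 r2.
have [_ /face2P[B1B _ _] _] := f1; have [_ /face2P[B2B _ _] _] := f2.
have [w1S1 v1T1 _] := r1; have [w2S2 v2T2 _] := r2.
have [le12 eq12] := lift_value_max f1 w1S1 v1T1 B2B w2S2 v2T2.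
have [le21 _] := lift_value_max f2 w2S2 v2T2 B1B w1S1 v1T1.
have := pairing_tface_rep c1 r1; have := pairing_tface_rep c1 r2.
have := pairing_tface_rep c2 r1; have := pairing_tface_rep c2 r2.
by move=> e22 e21 e12 e11; apply: eq12; lra.
Qed.

Variable i0 : 'I_k.

Definition top_offset X j :=
  if j \in X then (alpha j - alpha i0) / u else (beta i0 - beta j) / t.

Hypotheses (u_gt0 : 0 < u) (t_gt0 : 0 < t).

Lemma top_face_coord c X B Y : cell_faces c (i0 |: X) B (i0 |: Y) ->
  X :|: Y = [set~ i0] -> forall j, c 0 j = c 0 i0 + top_offset X j.
Proof.
move=> [f1 _ f3] XY j; have [u_neq0 t_neq0] := (lt0r_neq0 u_gt0, lt0r_neq0 t_gt0).
have [_ f1_eq] := argmax_setP (f := fun i => u * c 0 i - alpha i) f1 (setU11 _ _).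
have [_ f3_eq] := argmax_setP (f := fun i => - (t * c 0 i) - beta i) f3 (setU11 _ _).
rewrite /top_offset; case: ifP => jX.
  have /f1_eq eq_j : j \in i0 |: X by rewrite in_setU1 jX orbT.
  by apply: (mulfI u_neq0); rewrite mulrDr mulrCA divff // mulr1; lra.
have [-> | ji0] := eqVneq j i0; first by rewrite subrr mul0r addr0.
have jY : j \in Y by move: ji0; rewrite -in_setC1 -XY in_setU jX.
have /f3_eq eq_j : j \in i0 |: Y by rewrite in_setU1 jY orbT.
by apply: (mulfI t_neq0); rewrite mulrDr mulrCA divff // mulr1; lra.
Qed.

Lemma top_face_coord_lt c X B Y x y : cell_faces c (i0 |: X) B (i0 |: Y) ->
  X :|: Y = [set~ i0] -> (c 0 y < c 0 x) = (top_offset X y < top_offset X x).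
Proof.
by move=> fc XY; rewrite (top_face_coord fc XY y) (top_face_coord fc XY x) ltrD2l.
Qed.

Hypotheses (alpha_min : forall j, alpha i0 <= alpha j)
           (beta_min : forall j, beta i0 <= beta j).
Hypothesis alpha_beta_order : forall x y, x != y ->
  (alpha x < alpha y /\ beta x < beta y) \/ (alpha y < alpha x /\ beta y < beta x).

Lemma top_offset_between_lt X1 X2 X3 x y : x != y ->
  between (x \in X1) (x \in X2) (x \in X3) ->
  between (y \in X1) (y \in X2) (y \in X3) ->
  top_offset X1 y < top_offset X1 x -> top_offset X2 y < top_offset X2 x ->
  top_offset X3 y < top_offset X3 x.
Proof.
move=> xy; rewrite /top_offset.
have off_le j : (beta i0 - beta j) / t <= (alpha j - alpha i0) / u.
  apply: (@le_trans _ _ 0).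
    by rewrite pmulr_lle0 ?invr_gt0 // subr_le0.
  by rewrite pmulr_lge0 ?invr_gt0 // subr_ge0.
have offset_order :
  ((alpha x - alpha i0) / u < (alpha y - alpha i0) / u /\
   (beta i0 - beta y) / t < (beta i0 - beta x) / t) \/
  ((alpha y - alpha i0) / u < (alpha x - alpha i0) / u /\
   (beta i0 - beta x) / t < (beta i0 - beta y) / t).
  rewrite !ltr_pM2r ?invr_gt0 // !ltrD2r !ltrD2l !ltrN2.
  by case: (alpha_beta_order xy) => [[? ?] | [? ?]]; [left | right].
exact: select_between_lt offset_order (off_le x) (off_le y).
Qed.

Lemma top_coord_between_lt c1 c2 c3 X1 Y1 X2 Y2 X3 Y3 B1 B2 B3 x y :
  partitions_setC1 i0 X1 Y1 -> partitions_setC1 i0 X2 Y2 -> partitions_setC1 i0 X3 Y3 ->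
  X1 :&: X2 \subset X3 -> Y1 :&: Y2 \subset Y3 ->
  cell_faces c1 (i0 |: X1) B1 (i0 |: Y1) -> cell_faces c2 (i0 |: X2) B2 (i0 |: Y2) ->
  cell_faces c3 (i0 |: X3) B3 (i0 |: Y3) ->
  x != y -> c1 0 y < c1 0 x -> c2 0 y < c2 0 x -> c3 0 y < c3 0 x.
Proof.
move=> P1 P2 P3 sX sY f1 f2 f3 xy.
rewrite (top_face_coord_lt _ _ f1 (proj2 P1)) (top_face_coord_lt _ _ f2 (proj2 P2)).
rewrite (top_face_coord_lt _ _ f3 (proj2 P3)).
have betw := partitions_between P1 P2 P3 sX sY.
exact: top_offset_between_lt xy (betw x) (betw y).
Qed.

End Subdivision.

(* E = [n] is modelled by 'I_n.+1, the element 1 of [n] being ord0. *)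
Theorem mainTheorem9 (R : realFieldType) (n : nat)
    (bases : {set {set 'I_n.+1}}) (hM : is_matroid bases)
    (t u : nat) (ht : (0 < t)%N) (hu : (0 < u)%N)
    (alpha beta : 'I_n.+1 -> R)
    (halpha0 : forall i, 0 < alpha i)
    (halpha : forall i j : 'I_n.+1, (i < j)%N -> alpha i < alpha j)
    (hbeta0 : forall i, 0 < beta i)
    (hbeta : forall i j : 'I_n.+1, (i < j)%N -> beta i < beta j)
    (X1 Y1 X2 Y2 X3 Y3 B1 B2 B3 : {set 'I_n.+1})
    (hP1 : [disjoint X1 & Y1] /\ X1 :|: Y1 = [set~ ord0])
    (hP2 : [disjoint X2 & Y2] /\ X2 :|: Y2 = [set~ ord0])
    (hP3 : [disjoint X3 & Y3] /\ X3 :|: Y3 = [set~ ord0])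
    (hneq : (X1, Y1) <> (X2, Y2))
    (hT1 : top_degree_face bases u%:R t%:R alpha beta
             (ord0 |: X1) B1 (ord0 |: Y1))
    (hT2 : top_degree_face bases u%:R t%:R alpha beta
             (ord0 |: X2) B2 (ord0 |: Y2))
    (hT3 : top_degree_face bases u%:R t%:R alpha beta
             (ord0 |: X3) B3 (ord0 |: Y3))
    (p : 'rV[R]_n.+1)
    (hp1 : Tface u%:R t%:R (ord0 |: X1) B1 (ord0 |: Y1) p)
    (hp2 : Tface u%:R t%:R (ord0 |: X2) B2 (ord0 |: Y2) p)
    (hX : X1 :&: X2 \subset X3) (hY : Y1 :&: Y2 \subset Y3) :
  Tface u%:R t%:R (ord0 |: X3) B3 (ord0 |: Y3) p /\ B1 = B2 /\ B2 = B3.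
Proof.
have [u_gt0 t_gt0] : 0 < u%:R :> R /\ 0 < t%:R :> R by rewrite !ltr0n.
have [c1 f1] := top_degree_face_cell hT1; have [c2 f2] := top_degree_face_cell hT2.
have [c3 f3] := top_degree_face_cell hT3.
have /TfaceP[w1 [v1 r1]] := hp1; have /TfaceP[w2 [v2 r2]] := hp2.
have [B21 w2_supp v2_supp] := common_point_face f1 f2 r1 r2; subst B2.
have B13 : B1 = B3.
  have [[_ /face2P[B1B _ _] _] [_ f12 _]] := (f1, f1).
  have [[_ f22 _] [_ f32 _]] := (f2, f3).
  apply: exchange_optimal_base hM B1B f32 _ => x y xB yB exB.
  have xy : x != y by apply: contraNneq yB => <-.
  apply: (top_coord_between_lt u_gt0 t_gt0 (incr_ord0_min halpha) (incr_ord0_min hbeta)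
            (incr_same_order halpha hbeta) hP1 hP2 hP3 hX hY f1 f2 f3 xy).
    exact: face2_exchange_lt f12 xB yB exB.
  exact: face2_exchange_lt f22 xB yB exB.
split=> //; rewrite -B13; have [w2S2 v2T2 _] := r2.
apply: (tface_rep_restrict r2) => [i wi | j vj].
  apply: (subsetP (setU1I_subset ord0 hX)).
  by rewrite in_setI w2_supp ?(conv_weights_supp w2S2 wi).
apply: (subsetP (setU1I_subset ord0 hY)).
by rewrite in_setI v2_supp ?(conv_weights_supp v2T2 vj).
Qed.
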